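(* Let $t,b,k$ be positive integers with $4\le k\le t$ and $\ell=bk/(t(t-1))$ an integer, and let $d^*$ be a circular design neighbor-balanced at distances 1 and 2 in $\Omega_{(t,b,k)}$. Then under model $(\mathcal{M}2)$ the information matrix for the total effects $\psi=\tau+\lambda+\rho$ is $$C_{d^*}[\psi]=\frac{b(k-3)}{3(t-1)}\,Q_t,\qquad Q_t=I_t-t^{-1}J_t.$$
   Context: Designs: $t$ treatments, $b$ linear blocks; block $i$ has inner plots $j=1,\dots,k$ and border plots $j=0,k+1$; $d(i,j)$ is the treatment on plot $(i,j)$; circular means $d(i,0)=d(i,k)$, $d(i,k+1)=d(i,1)$. $\Omega_{(t,b,k)}$ is the set of circular designs with $t$ treatments and $b$ blocks of length $k$. $J_t$ is the $t\times t$ all-ones matrix. Model $(\mathcal{M}2)$: responses $Y_{i,j}$ ($1\le i\le b$, $1\le j\le k$) uncorrelated with common variance, $\mathbb{E}(Y_{i,j})=\beta_i+\tau_{d(i,j)}+\lambda_{d(i,j-1)}+\rho_{d(i,j+1)}$, i.e. $\mathbb{E}(Y)=B\beta+T_d\tau+L_d\lambda+R_d\rho$ with $B$ block incidence and $T_d,L_d,R_d$ ($bk\times t$) having a single $1$ in row $(i,j)$ at column $d(i,j)$, $d(i,j-1)$, $d(i,j+1)$ respectively. $\psi=K'\alpha$ with $\alpha=(\tau',\lambda',\rho')'$, $K=\mathbf 1_3\otimes I_t$. Information matrix: with $A=(T_d\mid L_d\mid R_d)$, $X^+$ the Moore–Penrose inverse, $\mathrm{pr}_{(X)}=X(X'X)^+X'$,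 $\mathrm{pr}^\perp_{(X)}=I-\mathrm{pr}_{(X)}$, $M=I-K(K'K)^+K'$, $X_1=AK(K'K)^+$, $X_2=(AM\mid B)$: $C_d[\psi]=X_1'\mathrm{pr}^\perp_{(X_2)}X_1$. CNBD: a design in $\Omega_{(t,b,k)}$ that is binary (each treatment at most once among the inner plots of each block), a balanced block design (equal replication and each unordered pair of distinct treatments together in the same number of blocks), and such that for each ordered pair $(a,c)$ of distinct treatments exactly $\ell$ inner plots $(i,j)$ have $d(i,j)=a$, $d(i,j+1)=c$. A CNBD2 (circular design neighbor-balanced at distances 1 and 2) is a CNBD such that moreover for each ordered pair $(a,c)$ of distinct treatments exactly $\ell$ inner plots $(i,j)$ have $d(i,j-1)=a$ and $d(i,j+1)=c$. *)

From HB Require Import structures.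
From mathcomp Require Import all_boot all_order all_algebra.
From mathcomp Require Import reals.
From Stdlib Require Import ClassicalEpsilon.
Set Implicit Arguments. Unset Strict Implicit. Unset Printing Implicit Defensive.
Import Order.TTheory GRing.Theory Num.Theory.
Local Open Scope ring_scope.

Section Defs.
Variable R : realType.

Definition is_mpinv m n (A : 'M[R]_(m, n)) (G : 'M[R]_(n, m)) : Prop :=
  [/\ A *m G *m A = A, G *m A *m G = G,
      (A *m G)^T = A *m G & (G *m A)^T = G *m A].

Definition mpinv m n (A : 'M[R]_(m, n)) : 'M[R]_(n, m) :=
  epsilon (inhabits 0) (is_mpinv A).

Definition pr m n (X : 'M[R]_(m, n)) : 'M[R]_m := X *m mpinv (X^T *m X) *m X^T.
Definition prperp m n (X : 'M[R]_(m, n)) : 'M[R]_m := 1%:M - pr X.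

(* A design: d i j = treatment on inner plot (i, j+1), i : block, j : 0-based
   inner position.  Circularity: left/right neighbours are taken cyclically. *)
Definition design (t b k : nat) := 'I_b -> 'I_k -> 'I_t.

Definition nplots (b k : nat) := #|{: 'I_b * 'I_k}|.
Definition plot (b k : nat) (r : 'I_(nplots b k)) : 'I_b * 'I_k := enum_val r.

Definition Tmat t b k (d : design t b k) : 'M[R]_(nplots b k, t) :=
  \matrix_(r, c) ((d (plot r).1 (plot r).2 == c)%:R).
Definition Lmat t b k (d : design t b k) : 'M[R]_(nplots b k, t) :=
  \matrix_(r, c) ((d (plot r).1 (ord_pred (plot r).2) == c)%:R).
Definition Rmat t b k (d : design t b k) : 'M[R]_(nplots b k, t) :=
  \matrix_(r, c) ((d (plot r).1 (ordS (plot r).2) == c)%:R).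
Definition Bmat b k : 'M[R]_(nplots b k, b) :=
  \matrix_(r, i) (((plot r).1 == i)%:R).

Definition Amat t b k (d : design t b k) : 'M[R]_(nplots b k, t + t + t) :=
  row_mx (row_mx (Tmat d) (Lmat d)) (Rmat d).
Definition Kmat t : 'M[R]_(t + t + t, t) := col_mx (col_mx 1%:M 1%:M) 1%:M.
Definition Mmat t : 'M[R]_(t + t + t) :=
  1%:M - Kmat t *m mpinv ((Kmat t)^T *m Kmat t) *m (Kmat t)^T.
Definition X1mat t b k (d : design t b k) : 'M[R]_(nplots b k, t) :=
  Amat d *m Kmat t *m mpinv ((Kmat t)^T *m Kmat t).
Definition X2mat t b k (d : design t b k) : 'M[R]_(nplots b k, (t + t + t) + b) :=
  row_mx (Amat d *m Mmat t) (Bmat b k).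

Definition info_psi t b k (d : design t b k) : 'M[R]_t :=
  (X1mat d)^T *m prperp (X2mat d) *m X1mat d.

End Defs.

Definition binary t b k (d : design t b k) : Prop :=
  forall i, injective (d i).

Definition in_block t b k (d : design t b k) (i : 'I_b) (a : 'I_t) : bool :=
  [exists j, d i j == a].

Definition balanced_block t b k (d : design t b k) : Prop :=
  (exists rep, forall a : 'I_t, #|[set p : 'I_b * 'I_k | d p.1 p.2 == a]| = rep) /\
  (exists lam, forall a c : 'I_t, a != c ->
     #|[set i : 'I_b | in_block d i a && in_block d i c]| = lam).

Definition nb1 t b k (d : design t b k) (l : nat) : Prop :=
  forall a c : 'I_t, a != c ->
    #|[set p : 'I_b * 'I_k | (d p.1 p.2 == a) && (d p.1 (ordS p.2) == c)]| = l.

Definition nb2 t b k (d : design t b k) (l : nat) : Prop :=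
  forall a c : 'I_t, a != c ->
    #|[set p : 'I_b * 'I_k |
        (d p.1 (ord_pred p.2) == a) && (d p.1 (ordS p.2) == c)]| = l.

Definition CNBD t b k (d : design t b k) (l : nat) : Prop :=
  [/\ binary d, balanced_block d & nb1 d l].

Definition CNBD2 t b k (d : design t b k) (l : nat) : Prop :=
  CNBD d l /\ nb2 d l.

From HB Require Import structures.
From mathcomp Require Import all_boot all_order all_algebra.
From mathcomp Require Import reals.
From mathcomp Require Import ring zify.
From Stdlib Require Import ClassicalEpsilon.
Set Implicit Arguments. Unset Strict Implicit. Unset Printing Implicit Defensive.
Import Order.TTheory GRing.Theory Num.Theory.
Local Open Scope ring_scope.

(* Write S = T_d + L_d + R_d and N = B'T_d; since K'K = 3 I, X_1 = S/3.  Shifting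
   every circular block by one plot gives B'L_d = B'R_d = N and L_d'L_d = R_d'R_d = T_d'T_d,
   while neighbour balance at distances 1 and 2 makes every cross product among T_d, L_d,
   R_d equal to l (J - I); hence T_d'S = L_d'S = R_d'S.  The residual Z = S/3 - B N/k of
   X_1 after regression on the blocks is therefore orthogonal to B and to A M (because
   A'Z = K T_d'Z and M'K = 0), so pr^perp_(X_2) X_1 = Z and C_d[psi] = X_1'Z = T_d'Z
   = T_d'S/3 - N'N/k.  Both terms are compound symmetric (csmx): T_d'S = r I + 2 l (J - I)
   and N'N = r I + (k - 1) l (J - I) with r = (t - 1) l, and l t (t - 1) = b k turns their
   difference into b (k - 3) / (3 (t - 1)) (I - J/t). *)

Section MoorePenrose.
Variable R : realType.

Lemma mulmx_trmx_eq0 m n (X : 'M[R]_(m, n)) : X *m X^T = 0 -> X = 0.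
Proof.
move=> XXt0; apply/matrixP => i j; rewrite mxE.
have sq0 : \sum_j0 X i j0 ^+ 2 = 0.
  transitivity ((X *m X^T) i i); last by rewrite XXt0 mxE.
  by rewrite mxE; apply: eq_bigr => j0 _; rewrite mxE expr2.
have /eqP := @psumr_eq0P _ _ _ _ (fun j0 _ => sqr_ge0 (X i j0)) sq0 j isT.
by rewrite sqrf_eq0 => /eqP.
Qed.

Lemma row_free_mul_trmx_unit r n (G : 'M[R]_(r, n)) : row_free G -> G *m G^T \in unitmx.
Proof.
move=> freeG; rewrite -row_free_unit; apply: inj_row_free => v vGGt0.
have vG0 : v *m G = 0.
  by apply: mulmx_trmx_eq0; rewrite trmx_mul mulmxA -(mulmxA v) vGGt0 mul0mx.
by apply: (row_free_inj freeG); rewrite vG0 mul0mx.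
Qed.

Lemma row_full_trmx_mul_unit m r (F : 'M[R]_(m, r)) : row_full F -> F^T *m F \in unitmx.
Proof.
by move=> fullF; rewrite -[X in _ *m X]trmxK row_free_mul_trmx_unit // /row_free mxrank_tr.
Qed.

Lemma is_mpinv_full_rank_factor m n r (F : 'M[R]_(m, r)) (G : 'M[R]_(r, n)) :
  F^T *m F \in unitmx -> G *m G^T \in unitmx ->
  is_mpinv (F *m G) (G^T *m invmx (G *m G^T) *m invmx (F^T *m F) *m F^T).
Proof.
move=> uF uG; set IF := invmx (F^T *m F); set IG := invmx (G *m G^T).
have IFK : IF *m (F^T *m F) = 1%:M by rewrite mulVmx.
have IGK : (G *m G^T) *m IG = 1%:M by rewrite mulmxV.
have IFsym : IF^T = IF by rewrite /IF trmx_inv trmx_mul trmxK.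
have IGsym : IG^T = IG by rewrite /IG trmx_inv trmx_mul trmxK.
have AGE : (F *m G) *m (G^T *m IG *m IF *m F^T) = F *m IF *m F^T.
  by rewrite !mulmxA -(mulmxA F G) -(mulmxA F) IGK mulmx1.
have GAE : (G^T *m IG *m IF *m F^T) *m (F *m G) = G^T *m IG *m G.
  by rewrite !mulmxA -!(mulmxA _ F^T F) -(mulmxA _ IF) IFK mulmx1.
split.
- by rewrite AGE !mulmxA -(mulmxA _ F^T F) -(mulmxA _ IF) IFK mulmx1.
- by rewrite GAE !mulmxA -(mulmxA _ G G^T) -(mulmxA _ _ IG) IGK mulmx1.
- by rewrite AGE !trmx_mul trmxK IFsym mulmxA.
- by rewrite GAE !trmx_mul trmxK IGsym mulmxA.
Qed.

Lemma mpinvP m n (A : 'M[R]_(m, n)) : is_mpinv A (mpinv A).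
Proof.
apply: epsilon_spec; have := is_mpinv_full_rank_factor
  (row_full_trmx_mul_unit (col_base_full A)) (row_free_mul_trmx_unit (row_base_free A)).
by rewrite mulmx_base; eexists; eassumption.
Qed.

Lemma mpinv_unit n (A : 'M[R]_n) : A \in unitmx -> mpinv A = invmx A.
Proof.
move=> uA; have [AGA _ _ _] := mpinvP A.
have <- : invmx A *m (A *m mpinv A *m A) *m invmx A = mpinv A.
  by rewrite -mulmxA mulmxK // mulKmx.
by rewrite AGA mulVmx // mul1mx.
Qed.

Lemma pr_mulmx m n (X : 'M[R]_(m, n)) : pr X *m X = X.
Proof.
have [XtXG _ _ _] := mpinvP (X^T *m X); set G := mpinv _ in XtXG.
set E := X *m G *m (X^T *m X) - X.
have XtE0 : X^T *m E = 0 by rewrite mulmxBr !mulmxA -(mulmxA _ X^T X) XtXG subrr.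
have EtE0 : E^T *m E = 0.
  have -> : E^T = (X^T *m X)^T *m G^T *m X^T - X^T.
    by rewrite /E linearB /= !trmx_mul mulmxA.
  by rewrite mulmxBl -!mulmxA XtE0 !mulmx0 subrr.
have E0 : E = 0.
  by apply: trmx_inj; rewrite trmx0; apply: mulmx_trmx_eq0; rewrite trmxK.
by move: E0 => /eqP; rewrite subr_eq0 /pr -!mulmxA => /eqP.
Qed.

Lemma prperp_residual m n p (X : 'M[R]_(m, n)) (Y : 'M[R]_(n, p)) (Z : 'M[R]_(m, p)) :
  X^T *m Z = 0 -> prperp X *m (X *m Y + Z) = Z.
Proof.
move=> XtZ0; have prZ0 : pr X *m Z = 0 by rewrite /pr -mulmxA XtZ0 mulmx0.
by rewrite /prperp mulmxBl mul1mx mulmxDr mulmxA pr_mulmx prZ0 addr0 addrC addKr.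
Qed.

End MoorePenrose.

Lemma ordS_val n (j : 'I_n) : nat_of_ord (ordS j) = if j.+1 == n then 0%N else j.+1.
Proof.
rewrite /=; case: eqP => [->|ne]; first by rewrite modnn.
by rewrite modn_small // ltn_neqAle ltn_ord andbT; apply/eqP.
Qed.

Lemma ordS_neq n (j : 'I_n) : (1 < n)%N -> ordS j != j.
Proof.
by move=> n_gt1; apply/eqP => /(congr1 (@nat_of_ord n)); rewrite ordS_val; case: eqP; lia.
Qed.

Lemma ordSS_neq n (j : 'I_n) : (2 < n)%N -> ordS (ordS j) != j.
Proof.
move=> n_gt2; apply/eqP => /(congr1 (@nat_of_ord n)); rewrite !ordS_val.
by have := ltn_ord j; case: (j.+1 =P n) => jn; case: ifP => /eqP; lia.
Qed.

Lemma ordS_neq_pred n (j : 'I_n) : (2 < n)%N -> ordS j != ord_pred j.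
Proof. by move=> n_gt2; rewrite -{1}(ord_predK j) ordSS_neq. Qed.


Section CompoundSymmetry.
Variables (R : comNzRingType) (m : nat).

Definition csmx (x y : R) : 'M[R]_m := \matrix_(a, c) if a == c then x else y.

Lemma scalar_csmx x : x%:M = csmx x 0.
Proof. by apply/matrixP => a c; rewrite !mxE; case: eqP. Qed.

Lemma const_csmx x : const_mx x = csmx x x.
Proof. by apply/matrixP => a c; rewrite !mxE; case: eqP. Qed.

Lemma csmxD x y x' y' : csmx x y + csmx x' y' = csmx (x + x') (y + y').
Proof. by apply/matrixP => a c; rewrite !mxE; case: eqP. Qed.

Lemma csmxN x y : - csmx x y = csmx (- x) (- y).
Proof. by apply/matrixP => a c; rewrite !mxE; case: eqP. Qed.

Lemma scale_csmx s x y : s *: csmx x y = csmx (s * x) (s * y).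
Proof. by apply/matrixP => a c; rewrite !mxE; case: eqP. Qed.

Lemma tr_csmx x y : (csmx x y)^T = csmx x y.
Proof. by apply/matrixP => a c; rewrite !mxE eq_sym. Qed.

Lemma csmx_mul_const x y : csmx x y *m const_mx 1 = const_mx (x + y *+ m.-1) :> 'cV_m.
Proof.
apply/matrixP => a j; rewrite !mxE (bigD1 a) //= !mxE eqxx mulr1; congr (_ + _).
rewrite (eq_bigr (fun _ => y)) => [|c /negbTE ac]; last by rewrite !mxE eq_sym ac mulr1.
by rewrite sumr_const cardC1 card_ord.
Qed.

Lemma diag_mul_const_csmx (M : 'M[R]_m) x :
  (forall a c, a != c -> M a c = 0) -> M *m const_mx 1 = const_mx x :> 'cV_m ->
  M = csmx x 0.
Proof.
move=> Mdiag /matrixP /(_ _ 0) Mrow; apply/matrixP => a c; rewrite mxE.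
case: eqP => [<-|/eqP ac]; last exact: Mdiag.
have := Mrow a; rewrite !mxE (bigD1 a) //= mxE mulr1 big1 ?addr0 // => c' /negbTE ac'.
by rewrite Mdiag ?mul0r // eq_sym ac'.
Qed.

End CompoundSymmetry.

Arguments csmx {R m} x y.

Lemma scale_inv3_add3 (R : numFieldType) m n (A : 'M[R]_(m, n)) :
  3%:R^-1 *: (A + A + A) = A.
Proof.
have -> : A + A + A = 3%:R *: A by rewrite scaler_nat !mulrSr mulr0n add0r.
by rewrite scalerA mulVf ?pnatr_eq0 // scale1r.
Qed.

Section Incidence.
Variables (R : realType) (b k : nat).
Local Notation plots := ('I_b * 'I_k)%type.

Definition incmx m (f : plots -> 'I_m) : 'M[R]_(nplots b k, m) :=
  \matrix_(r, c) ((f (plot r) == c)%:R).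

Definition cooccur m m' (f : plots -> 'I_m) (g : plots -> 'I_m') a c : R :=
  \sum_p ((f p == a) && (g p == c))%:R.

Lemma tr_incmx_mul m m' (f : plots -> 'I_m) (g : plots -> 'I_m') :
  (incmx f)^T *m incmx g = \matrix_(a, c) cooccur f g a c.
Proof.
apply/matrixP => a c; rewrite !mxE /cooccur (reindex (@enum_val plots predT)).
  by apply: eq_bigr => r _; rewrite !mxE -natrM mulnb.
by apply: onW_bij; exact: enum_val_bij.
Qed.

Lemma incmx_mul_const m (f : plots -> 'I_m) :
  incmx f *m const_mx 1 = const_mx 1 :> 'cV_(nplots b k).
Proof.
apply/matrixP => r j; rewrite !mxE (bigD1 (f (plot r))) //= !mxE eqxx mul1r big1 ?addr0 //.
by move=> c /negbTE fc; rewrite !mxE eq_sym fc mul0r.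
Qed.

Lemma tr_incmx_mul_reindex m m' (f f' : plots -> 'I_m) (g g' : plots -> 'I_m') h :
  injective h -> f' =1 f \o h -> g' =1 g \o h ->
  (incmx f')^T *m incmx g' = (incmx f)^T *m incmx g.
Proof.
move=> h_inj ff' gg'; rewrite !tr_incmx_mul; apply/matrixP => a c; rewrite !mxE.
by rewrite /cooccur [RHS](reindex_inj h_inj); apply: eq_bigr => p _; rewrite ff' gg'.
Qed.

Lemma cooccur_card m m' (f : plots -> 'I_m) (g : plots -> 'I_m') a c :
  cooccur f g a c = #|[set p | (f p == a) && (g p == c)]|%:R.
Proof.
rewrite -sum1_card natr_sum [RHS]big_mkcond /=; apply: eq_bigr => p _.
by rewrite inE; case: (_ && _).
Qed.

Lemma cooccur_diag_eq0 m (f g : plots -> 'I_m) a :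
  (forall p, f p != g p) -> cooccur f g a a = 0.
Proof.
move=> fg; apply: big1 => p _; case: (f p =P a) => //= fpa.
by rewrite -fpa eq_sym (negbTE (fg p)).
Qed.

Lemma cooccur_self_offdiag m (f : plots -> 'I_m) a c : a != c -> cooccur f f a c = 0.
Proof. by move=> /negbTE ac; apply: big1 => p _; case: (f p =P a) => //= ->; rewrite ac. Qed.

End Incidence.

Section Kmat.
Variables (R : realType) (t : nat).

Lemma Kmat_gram : (Kmat R t)^T *m Kmat R t = 3%:R%:M.
Proof.
rewrite /Kmat !tr_col_mx !mul_row_col !trmx1 !mul1mx -!raddfD /=.
by rewrite !mulrS mulr0n addr0 addrA.
Qed.

Lemma mpinv_Kmat_gram : mpinv ((Kmat R t)^T *m Kmat R t) = 3%:R^-1%:M.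
Proof.
rewrite Kmat_gram mpinv_unit ?invmx_scalar //.
by rewrite unitmxE det_scalar unitrX // unitfE pnatr_eq0.
Qed.

Lemma trMmat_Kmat : (Mmat R t)^T *m Kmat R t = 0.
Proof.
rewrite /Mmat mpinv_Kmat_gram linearB /= trmx1 !trmx_mul trmxK tr_scalar_mx.
rewrite mulmxBl mul1mx -!mulmxA Kmat_gram mul_scalar_mx scale_scalar_mx.
by rewrite mulVf ?pnatr_eq0 // mulmx1 subrr.
Qed.

End Kmat.

Section Design.
Variables (R : realType) (t b k : nat) (d : design t b k) (l : nat).
Local Notation plots := ('I_b * 'I_k)%type.

Definition treat (p : plots) := d p.1 p.2.
Definition ltreat (p : plots) := d p.1 (ord_pred p.2).
Definition rtreat (p : plots) := d p.1 (ordS p.2).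
Definition shift (p : plots) : plots := (p.1, ordS p.2).

Lemma shift_inj : injective shift.
Proof. by move=> [i j] [i' j'] /pair_equal_spec [/= -> /ordS_inj ->]. Qed.

Local Notation Td := (Tmat R d).
Local Notation Ld := (Lmat R d).
Local Notation Rd := (Rmat R d).
Local Notation Bd := (Bmat R b k).
Local Notation S := (Td + Ld + Rd).
Local Notation N := (Bd^T *m Td).

Lemma Tmat_incmx : Td = incmx R treat. Proof. by []. Qed.
Lemma Lmat_incmx : Ld = incmx R ltreat. Proof. by []. Qed.
Lemma Rmat_incmx : Rd = incmx R rtreat. Proof. by []. Qed.
Lemma Bmat_incmx : Bd = incmx R (@fst 'I_b 'I_k). Proof. by []. Qed.

Lemma gram_LT : Ld^T *m Td = Td^T *m Rd.
Proof.
rewrite Tmat_incmx Lmat_incmx Rmat_incmx.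
by symmetry; apply: (tr_incmx_mul_reindex _ shift_inj) => p //; rewrite /ltreat /= ordSK.
Qed.

Lemma gram_LL : Ld^T *m Ld = Td^T *m Td.
Proof.
rewrite Tmat_incmx Lmat_incmx.
by symmetry; apply: (tr_incmx_mul_reindex _ shift_inj) => p //; rewrite /ltreat /= ordSK.
Qed.

Lemma gram_RR : Rd^T *m Rd = Td^T *m Td.
Proof.
by rewrite Tmat_incmx Rmat_incmx; apply: (tr_incmx_mul_reindex _ shift_inj).
Qed.

Lemma gram_BL : Bd^T *m Ld = N.
Proof.
rewrite Bmat_incmx Tmat_incmx Lmat_incmx.
by symmetry; apply: (tr_incmx_mul_reindex _ shift_inj) => p //; rewrite /ltreat /= ordSK.
Qed.

Lemma gram_BR : Bd^T *m Rd = N.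
Proof.
by rewrite Bmat_incmx Tmat_incmx Rmat_incmx; apply: (tr_incmx_mul_reindex _ shift_inj).
Qed.

Lemma gram_BB : Bd^T *m Bd = k%:R%:M.
Proof.
rewrite Bmat_incmx tr_incmx_mul; apply/matrixP => i i'; rewrite !mxE /cooccur.
rewrite -(pair_big predT predT (fun i0 _ => ((i0 == i) && (i0 == i'))%:R)) /=.
rewrite (bigD1 i) //= eqxx sumr_const card_ord big1 ?addr0.
  by case: eqP; rewrite ?mulr1n ?mul0rn ?mulr0n.
by move=> i0 /negbTE i0i; rewrite i0i big1.
Qed.

Lemma colsum_Bmat : Bd^T *m const_mx 1 = const_mx k%:R :> 'cV_b.
Proof.
rewrite -[const_mx 1](incmx_mul_const R (@fst 'I_b 'I_k)) -Bmat_incmx mulmxA gram_BB.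
by rewrite mul_scalar_mx; apply/matrixP => i j; rewrite !mxE mulr1.
Qed.

Lemma X1mat_S : X1mat R d = 3%:R^-1 *: S.
Proof.
by rewrite /X1mat mpinv_Kmat_gram /Amat /Kmat !mul_row_col !mulmx1 mul_mx_scalar.
Qed.

Hypotheses (k_gt2 : (2 < k)%N) (t_gt1 : (1 < t)%N).
Hypotheses (d_bin : binary d) (d_bb : balanced_block d) (d_nb1 : nb1 d l) (d_nb2 : nb2 d l).

Local Notation repl := (t.-1 * l)%N.
Local Notation G := (csmx repl%:R (l%:R + l%:R) : 'M[R]_t).

Lemma gram_TR : Td^T *m Rd = csmx 0 l%:R.
Proof.
rewrite Tmat_incmx Rmat_incmx tr_incmx_mul; apply/matrixP => a c; rewrite !mxE.
case: eqP => [<-|/eqP ac]; last by rewrite cooccur_card d_nb1.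
apply: cooccur_diag_eq0 => -[i j].
by rewrite /treat /rtreat /= (inj_eq (@d_bin i)) eq_sym ordS_neq // ltnW.
Qed.

Lemma gram_LR : Ld^T *m Rd = csmx 0 l%:R.
Proof.
rewrite Lmat_incmx Rmat_incmx tr_incmx_mul; apply/matrixP => a c; rewrite !mxE.
case: eqP => [<-|/eqP ac]; last by rewrite cooccur_card d_nb2.
apply: cooccur_diag_eq0 => -[i j].
by rewrite /ltreat /rtreat /= (inj_eq (@d_bin i)) eq_sym ordS_neq_pred.
Qed.

Lemma colsum_Tmat : Td^T *m const_mx 1 = const_mx repl%:R :> 'cV_t.
Proof.
rewrite -(incmx_mul_const R rtreat) -Rmat_incmx mulmxA gram_TR csmx_mul_const add0r.
by rewrite natrM mulr_natl.
Qed.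

Lemma gram_TT : Td^T *m Td = csmx repl%:R 0.
Proof.
apply: diag_mul_const_csmx => [a c ac|].
  by rewrite Tmat_incmx tr_incmx_mul mxE cooccur_self_offdiag.
by rewrite -mulmxA {2}Tmat_incmx incmx_mul_const colsum_Tmat.
Qed.

Lemma trTmat_S : Td^T *m S = G.
Proof.
rewrite !mulmxDr gram_TT gram_TR -[Td^T *m Ld]trmxK trmx_mul trmxK gram_LT gram_TR.
by rewrite tr_csmx !csmxD !addr0 add0r.
Qed.

Lemma trLmat_S : Ld^T *m S = G.
Proof. by rewrite !mulmxDr gram_LT gram_TR gram_LL gram_TT gram_LR !csmxD !addr0 !add0r. Qed.

Lemma trRmat_S : Rd^T *m S = G.
Proof.
rewrite !mulmxDr gram_RR gram_TT -[Rd^T *m Td]trmxK trmx_mul trmxK gram_TR.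
by rewrite -[Rd^T *m Ld]trmxK trmx_mul trmxK gram_LR !tr_csmx !csmxD !addr0 !add0r.
Qed.

Lemma incidence_in_block i a : N i a = (in_block d i a)%:R.
Proof.
rewrite Bmat_incmx Tmat_incmx tr_incmx_mul mxE /cooccur.
rewrite -(pair_big predT predT (fun i0 j => ((i0 == i) && (d i0 j == a))%:R)) /=.
rewrite (bigD1 i) //= [X in _ + X]big1 ?addr0; last first.
  by move=> i0 /negbTE i0i; rewrite big1 // => j; rewrite i0i.
rewrite eqxx /in_block; case: existsP => [[j0 /eqP dj0]|no_j].
  rewrite (bigD1 j0) //= dj0 eqxx big1 ?addr0 // => j /negbTE jj0.
  by rewrite -dj0 (inj_eq (@d_bin i)) jj0.
by rewrite big1 // => j _; case: eqP => // dj; case: no_j; exists j; rewrite dj.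
Qed.

Lemma rowsum_N : N *m const_mx 1 = k%:R *: const_mx 1 :> 'cV_b.
Proof.
rewrite -mulmxA Tmat_incmx incmx_mul_const colsum_Bmat.
by apply/matrixP => i j; rewrite !mxE mulr1.
Qed.

Lemma colsum_N : N^T *m const_mx 1 = const_mx repl%:R :> 'cV_t.
Proof.
by rewrite trmx_mul trmxK -mulmxA Bmat_incmx incmx_mul_const colsum_Tmat.
Qed.

Lemma concurrence : N^T *m N = csmx repl%:R (k.-1 * l)%:R.
Proof.
have [_ [lam d_lam]] := d_bb.
have NtN : N^T *m N = csmx repl%:R lam%:R.
  apply/matrixP => a c; rewrite [RHS]mxE mxE; case: eqP => [<-|/eqP ac].
    have /matrixP /(_ a 0) := colsum_N; rewrite [RHS]mxE mxE => <-.
    apply: eq_bigr => i _.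
    rewrite [N^T a i]mxE [const_mx 1 i 0]mxE mulr1 incidence_in_block.
    by case: in_block; rewrite ?mulr1 ?mulr0.
  rewrite -(d_lam _ _ ac) -sum1_card natr_sum [RHS]big_mkcond /=.
  apply: eq_bigr => i _; rewrite [N^T a i]mxE !incidence_in_block inE.
  by case: in_block; case: in_block; rewrite ?mulr1 ?mulr0.
(* Row sums of N'N, computed in two ways, give r + lam (t - 1) = k r. *)
have /matrixP /(_ (Ordinal (ltnW t_gt1)) 0) := congr1 (mulmx^~ (const_mx 1 : 'cV_t)) NtN.
rewrite -mulmxA rowsum_N -scalemxAr colsum_N csmx_mul_const !mxE.
rewrite -(mulr_natr lam%:R) -!natrM -natrD => /eqP; rewrite eqr_nat => /eqP row_sum.
suff lam_val : lam = (k.-1 * l)%N by rewrite NtN lam_val.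
have : (t.-1 * (k * l) = t.-1 * (l + lam))%N.
  by rewrite mulnDr (mulnC _ lam) -row_sum mulnCA.
move=> /eqP; rewrite eqn_pmul2l; last by lia.
by rewrite -subn1 mulnBl mul1n => /eqP ->; rewrite addKn.
Qed.

Local Notation W := (k%:R^-1 *: N).
Local Notation Z := (3%:R^-1 *: S - Bd *m W).

Lemma trBmat_Z : Bd^T *m Z = 0.
Proof.
have kn0 : k%:R != 0 :> R by rewrite pnatr_eq0; lia.
rewrite mulmxBr -scalemxAr !mulmxDr gram_BL gram_BR mulmxA gram_BB mul_scalar_mx.
by rewrite scalerA mulfV // scale1r scale_inv3_add3 subrr.
Qed.

Lemma trTmat_Bmat : Td^T *m Bd = N^T.
Proof. by rewrite trmx_mul trmxK. Qed.

Lemma trLmat_Z : Ld^T *m Z = Td^T *m Z.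
Proof.
rewrite !mulmxBr -!scalemxAr trLmat_S trTmat_S !mulmxA trTmat_Bmat.
by rewrite -gram_BL trmx_mul trmxK.
Qed.

Lemma trRmat_Z : Rd^T *m Z = Td^T *m Z.
Proof.
rewrite !mulmxBr -!scalemxAr trRmat_S trTmat_S !mulmxA trTmat_Bmat.
by rewrite -gram_BR trmx_mul trmxK.
Qed.

Lemma trX2mat_Z : (X2mat R d)^T *m Z = 0.
Proof.
have AtZ : (Amat R d)^T *m Z = Kmat R t *m (Td^T *m Z).
  by rewrite /Amat /Kmat !tr_row_mx !mul_col_mx !mul1mx trLmat_Z trRmat_Z.
rewrite /X2mat tr_row_mx mul_col_mx trmx_mul -mulmxA AtZ mulmxA trMmat_Kmat.
by rewrite mul0mx trBmat_Z col_mx0.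
Qed.

Lemma info_psi_Z : info_psi R d = Td^T *m Z.
Proof.
have X1E : X1mat R d = X2mat R d *m col_mx 0 W + Z.
  by rewrite /X2mat mul_row_col mulmx0 add0r X1mat_S [RHS]addrC subrK.
have trS : S^T = Td^T + Ld^T + Rd^T by rewrite !linearD.
rewrite /info_psi -mulmxA {2}X1E prperp_residual ?trX2mat_Z // X1mat_S.
rewrite [(_ *: S)^T]linearZ /= -scalemxAl trS !mulmxDl trLmat_Z trRmat_Z.
by rewrite scale_inv3_add3.
Qed.

Lemma info_psi_csmx : info_psi R d =
  csmx (3%:R^-1 * repl%:R - k%:R^-1 * repl%:R)
       (3%:R^-1 * (l%:R + l%:R) - k%:R^-1 * (k.-1 * l)%:R).
Proof.
rewrite info_psi_Z mulmxBr -scalemxAr trTmat_S mulmxA trTmat_Bmat -scalemxAr.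
by rewrite concurrence !scale_csmx csmxN csmxD.
Qed.

End Design.

Theorem lemma5 (R : realType) (t b k l : nat) (d : design t b k) :
  (0 < b)%N -> (4 <= k)%N -> (k <= t)%N ->
  (l * (t * (t - 1)))%N = (b * k)%N ->
  CNBD2 d l ->
  info_psi R d =
    ((b * (k - 3))%:R / (3 * (t - 1))%:R) *: (1%:M - t%:R^-1 *: const_mx 1).
Proof.
move=> _ k_ge4 k_le_t l_eq [[d_bin d_bb d_nb1] d_nb2].
have k_gt2 : (2 < k)%N by lia.
have t_gt1 : (1 < t)%N by lia.
rewrite (info_psi_csmx R k_gt2 t_gt1 d_bin d_bb d_nb1 d_nb2).
rewrite scalar_csmx const_csmx !scale_csmx csmxN csmxD !scale_csmx.
have kR : k%:R != 0 :> R by rewrite pnatr_eq0; lia.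
have tR : t%:R != 0 :> R by rewrite pnatr_eq0; lia.
have t1R : t%:R - 1 != 0 :> R by rewrite subr_eq0 pnatr_eq1; lia.
have bR : b%:R = l%:R * t%:R * (t%:R - 1) / k%:R :> R.
  apply: (mulIf kR); rewrite mulfVK // -[b%:R * _]natrM -l_eq.
  by rewrite !natrM natrB 1?ltnW // mulrA.
rewrite -!subn1 !natrM !natrB ?bR; try lia.
by congr csmx; field; rewrite kR tR t1R.
Qed.
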